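(* Let $G=(V,E)$ be a reduced undirected graph (parallel edges allowed) with terminals $s,t$, and let $T\subseteq E$ be a tracking edge set for $G$. Then every cycle of $G$ contains an edge belonging to $T$.
   Context: An $s$-$t$ path is a simple path from $s$ to $t$. A set $T\subseteq E$ is a tracking edge set if for any two distinct $s$-$t$ paths $P_1,P_2$, the sequence of edges of $T\cap E(P_1)$ in the order traversed along $P_1$ differs from the sequence of edges of $T\cap E(P_2)$ in the order traversed along $P_2$. A graph is reduced if every vertex and every edge lies on at least one $s$-$t$ path. *)

From mathcomp Require Import all_boot.
Set Implicit Arguments. Unset Strict Implicit. Unset Printing Implicit Defensive.

(* A finite undirected multigraph: vertex type V, edge type E (parallel edges
   are just distinct elements of E with the same endpoints), and
   ends e = the two endpoints of e (the orientation of the pair is irrelevant). *)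

Definition joins (V E : finType) (ends : E -> V * V) (e : E) (u v : V) : bool :=
  (ends e == (u, v)) || (ends e == (v, u)).

Fixpoint trail_from (V E : finType) (ends : E -> V * V) (u : V)
    (P : seq E) (vs : seq V) : bool :=
  match P, vs with
  | [::], [::] => true
  | e :: P', v :: vs' => joins ends e u v && trail_from ends v P' vs'
  | _, _ => false
  end.

Definition st_path_with (V E : finType) (ends : E -> V * V) (s t : V)
    (P : seq E) (vs : seq V) : bool :=
  [&& trail_from ends s P vs, uniq (s :: vs) & last s vs == t].

Definition st_path (V E : finType) (ends : E -> V * V) (s t : V) (P : seq E) : Prop :=
  exists vs : seq V, st_path_with ends s t P vs.

Definition reduced (V E : finType) (ends : E -> V * V) (s t : V) : Prop :=
  (forall v : V, exists P vs, st_path_with ends s t P vs /\ v \in s :: vs) /\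
  (forall e : E, exists P, st_path ends s t P /\ e \in P).

Definition tracking (V E : finType) (ends : E -> V * V) (s t : V) (T : {set E}) : Prop :=
  forall P1 P2 : seq E, st_path ends s t P1 -> st_path ends s t P2 ->
    P1 <> P2 -> [seq e <- P1 | e \in T] <> [seq e <- P2 | e \in T].

(* A cycle: a closed walk u -> v1 -> ... -> v_{k-1} -> u with k >= 1 edges,
   pairwise distinct vertices u, v1, ..., v_{k-1} and pairwise distinct edges
   (so two parallel edges form a cycle of length 2). *)
Definition is_cycle (V E : finType) (ends : E -> V * V) (C : seq E) : Prop :=
  exists (u : V) (vs : seq V),
    [&& 0 < size C, trail_from ends u C (rcons vs u), uniq (u :: vs) & uniq C].

From mathcomp Require Import all_boot.
Set Implicit Arguments. Unset Strict Implicit. Unset Printing Implicit Defensive.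

(* Suppose a cycle C avoids T. Some s-t path P uses an edge of C; let x and y
   be the first and the last vertex of P on C. Then x <> y, since otherwise P
   would have no room for that edge. Replacing the part of P between x and y by
   either of the two arcs of C from x to y yields two distinct s-t paths whose
   T-edges are exactly those of P outside C, contradicting tracking. *)

Lemma perm_last_rev_belast (T : eqType) (x : T) (s : seq T) :
  perm_eq (last x s :: rev (belast x s)) (x :: s).
Proof. by rewrite [x :: s]lastI -rev_rcons perm_rev. Qed.

Lemma last_rev_belast (T : Type) (x : T) (s : seq T) :
  last (last x s) (rev (belast x s)) = x.
Proof. by case: s => [|y s] //=; rewrite rev_cons last_rcons. Qed.

Section Trails.
Variables (V E : finType) (ends : E -> V * V).
Local Notation trail := (trail_from ends).
Local Notation st_path_with := (st_path_with ends).

Lemma joinsC e a b : joins ends e a b = joins ends e b a.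
Proof. by rewrite /joins orbC. Qed.

Lemma joins_ends e a b a' b' : joins ends e a b -> joins ends e a' b' ->
  (a \in [:: a'; b']) && (b \in [:: a'; b']).
Proof.
by rewrite /joins => /orP[]/eqP-> /orP[]/eqP[-> ->]; rewrite !inE !eqxx ?orbT.
Qed.

Lemma size_trail u P vs : trail u P vs -> size P = size vs.
Proof. by elim: P u vs => [|e P IH] u [|v vs] //= /andP[_ /IH ->]. Qed.

Lemma trail_cat u P1 P2 vs1 vs2 : size P1 = size vs1 ->
  trail u (P1 ++ P2) (vs1 ++ vs2) = trail u P1 vs1 && trail (last u vs1) P2 vs2.
Proof. by elim: P1 u vs1 => [|e P IH] u [|v vs] //= [/IH ->]; rewrite andbA. Qed.

Lemma trail_rev u P vs : trail u P vs -> trail (last u vs) (rev P) (rev (belast u vs)).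
Proof.
elim: P u vs => [|e P IH] u [|v vs] //= /andP[Huv Hv].
rewrite !rev_cons -!cats1 trail_cat ?size_rev ?size_belast ?(size_trail Hv) //.
by rewrite IH //= last_rev_belast joinsC Huv.
Qed.

Lemma mem_trail_edge u P vs e : trail u P vs -> e \in P ->
  exists a b, [/\ joins ends e a b, a \in belast u vs & b \in vs].
Proof.
elim: P u vs => [|f P IH] u [|v vs] //= /andP[Huv Hv].
rewrite inE => /orP[/eqP->|/(IH _ _ Hv)[a [b [Hab Ha Hb]]]].
- by exists u, v; rewrite Huv !inE !eqxx.
- by exists a, b; rewrite Hab !inE Ha Hb !orbT.
Qed.

Lemma trail_split_first (c : pred V) u P vs : trail u P vs -> has c (u :: vs) ->
  exists P1 P2 vs1 vs2, [/\ P = P1 ++ P2, vs = vs1 ++ vs2, trail u P1 vs1,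
     trail (last u vs1) P2 vs2 & c (last u vs1) && all (predC c) (belast u vs1)].
Proof.
elim: P u vs => [|e P IH] u [|v vs] //=.
- by move=> cu; exists [::], [::], [::], [::]; split => //=; rewrite cu.
- move=> /andP[Huv Hv] Hc.
  have [cu|ncu] := boolP (c u).
    by exists [::], (e :: P), [::], (v :: vs); rewrite /= Huv Hv cu.
  move: Hc; rewrite (negbTE ncu) => /(IH _ _ Hv)[P1 [P2 [vs1 [vs2 [-> -> H1 H2 H3]]]]].
  by exists (e :: P1), P2, (v :: vs1), vs2; rewrite /= Huv H1 H2 ncu.
Qed.

Lemma trail_split_last (c : pred V) u P vs : trail u P vs -> has c (u :: vs) ->
  exists P1 P2 vs1 vs2, [/\ P = P1 ++ P2, vs = vs1 ++ vs2, trail u P1 vs1,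
     trail (last u vs1) P2 vs2 & c (last u vs1) && all (predC c) vs2].
Proof.
elim: P u vs => [|e P IH] u [|v vs] //=.
- by move=> cu; exists [::], [::], [::], [::]; split => //=; rewrite cu.
- move=> /andP[Huv Hv] Hc.
  have [/(IH _ _ Hv)[P1 [P2 [vs1 [vs2 [-> -> H1 H2 H3]]]]]|nc] := boolP (c v || has c vs).
    by exists (e :: P1), P2, (v :: vs1), vs2; rewrite /= Huv H1 H2 H3.
  exists [::], (e :: P), [::], (v :: vs); rewrite /= Huv Hv.
  have cu : c u by move: Hc; rewrite (negbTE nc) orbF.
  by split => //=; rewrite cu all_predC -negb_or.
Qed.

Lemma st_path_with_rev x y P W :
  st_path_with x y P W -> st_path_with y x (rev P) (rev (belast x W)).
Proof.
case/and3P=> HP HW /eqP <-.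
by rewrite /st_path_with (trail_rev HP) (perm_uniq (perm_last_rev_belast x W)) HW
  last_rev_belast eqxx.
Qed.

Lemma st_path_with_cat s x t P Q vs ws :
  st_path_with s x P vs -> st_path_with x t Q ws -> uniq (s :: vs ++ ws) ->
  st_path_with s t (P ++ Q) (vs ++ ws).
Proof.
case/and3P=> HP _ /eqP Hx /and3P[HQ _ /eqP Ht] Hu.
rewrite /st_path_with trail_cat ?(size_trail HP) //.
by rewrite HP Hx HQ Hu last_cat Hx Ht eqxx.
Qed.

Lemma st_path_with_size_gt0 x y P W : st_path_with x y P W -> x != y -> 0 < size P.
Proof.
case/and3P=> HP _ /eqP <-; rewrite (size_trail HP).
by case: W HP => //= _; rewrite eqxx.
Qed.

Lemma closed_trail_rotate u C ws x : trail u C ws -> last u ws = u -> x \in ws ->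
  exists C' ws', [/\ perm_eq C' C, perm_eq ws' ws, trail x C' ws' & last x ws' = x].
Proof.
move=> HC Hu Hx.
have Hx' : has (pred1 x) (u :: ws) by rewrite has_pred1 inE Hx orbT.
have [C1 [C2 [ws1 [ws2 [-> Ews H1 H2 /andP[/eqP Ex _]]]]]] := trail_split_first HC Hx'.
have Hlast : last x ws2 = u by rewrite -Ex -last_cat -Ews.
exists (C2 ++ C1), (ws2 ++ ws1); rewrite Ews; split.
- by rewrite perm_catC.
- by rewrite perm_catC.
- by rewrite trail_cat ?(size_trail H2) // -Ex H2 Ex Hlast.
- by rewrite last_cat Hlast.
Qed.

Lemma closed_trail_arcs u C ws x y :
  trail u C ws -> last u ws = u -> uniq ws -> x \in ws -> y \in ws -> x != y ->
  exists D1 D2 W1 W2, [/\ perm_eq (D1 ++ D2) C, st_path_with x y D1 W1,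
    st_path_with x y D2 W2 & {subset W1 ++ W2 <= ws}].
Proof.
move=> HC Hu Hws Hx Hy Hxy.
have [C' [ws' [HCC' Hwsws' HC' Hx']]] := closed_trail_rotate HC Hu Hx.
have Hy' : has (pred1 y) (x :: ws') by rewrite has_pred1 inE (perm_mem Hwsws') Hy orbT.
have [D1 [D2 [W1 [W2 [EC' Ews' H1 H2 /andP[/eqP Ey _]]]]]] := trail_split_first HC' Hy'.
rewrite Ey in H2.
have Hx2 : last y W2 = x by rewrite -Ey -last_cat -Ews'.
have HW : uniq (W1 ++ W2) by rewrite -Ews' (perm_uniq Hwsws').
have yW1 : y \in W1.
  case: W1 {H1 Ews' HW} Ey => [|w W1] /= Ey; first by rewrite Ey eqxx in Hxy.
  by rewrite -Ey mem_last.
have xW2 : x \in W2.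
  case: W2 {H2 Ews' HW} Hx2 => [|w W2] /= Hx2; first by rewrite Hx2 eqxx in Hxy.
  by rewrite -Hx2 mem_last.
move: (HW); rewrite cat_uniq => /and3P[HW1 /hasPn HW12 HW2].
have P1 : st_path_with x y D1 W1.
  rewrite /st_path_with H1 Ey eqxx /= HW1 !andbT.
  by apply/negP => xW1; move: (HW12 _ xW2); rewrite xW1.
have P2 : st_path_with y x D2 W2.
  rewrite /st_path_with H2 Hx2 eqxx /= HW2 !andbT.
  by apply/negP => /HW12; rewrite yW1.
exists D1, (rev D2), W1, (rev (belast y W2)); split=> //.
- by apply: perm_trans HCC'; rewrite EC' perm_cat2l perm_rev.
- exact: st_path_with_rev.
- move=> z; rewrite -(perm_mem Hwsws') Ews' !mem_cat mem_rev => /orP[-> //|/mem_belast].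
  by rewrite inE => /orP[/eqP->|->]; rewrite ?yW1 ?orbT.
Qed.

Lemma st_path_entry_exit (c : pred V) s t P ps e a b :
  st_path_with s t P ps -> e \in P -> joins ends e a b -> c a -> c b ->
  exists x y A B avs bvs, [/\ [&& c x, c y & x != y], st_path_with s x A avs,
    st_path_with y t B bvs, uniq (s :: avs ++ bvs)
    & all (predC c) (belast s avs ++ bvs)].
Proof.
case/and3P=> HP Hu /eqP Ht He Hab ca cb.
have c_ends a' b' : joins ends e a' b' -> c a' && c b'.
  move=> Hab'; case/andP: (joins_ends Hab' Hab); rewrite !inE.
  by case/orP=> /eqP-> /orP[]/eqP->; rewrite ?ca ?cb.
have Hc : has c (s :: ps).
  have [a' [b' [/c_ends/andP[_ cb'] _ Hb']]] := mem_trail_edge HP He.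
  by apply/hasP; exists b'; rewrite ?inE ?Hb' ?orbT.
have [A [R [avs [rvs [EP Eps HA HR /andP[cx Ha]]]]]] := trail_split_first HP Hc.
set x := last s avs in HR cx.
have Hcx : has c (x :: rvs) by rewrite /= cx.
have [M [B [mvs [bvs [ER Erv HM HB /andP[cy Hb]]]]]] := trail_split_last HR Hcx.
set y := last x mvs in HB cy.
rewrite {}Eps {}Erv in Hu Ht; rewrite {}EP {}ER in He.
have Hu' : uniq ((s :: avs ++ mvs) ++ bvs) by rewrite cat_cons -catA.
have Hyb : y \notin bvs by apply: contraL cy => /(allP Hb).
have Hxy : x != y.
  apply/eqP => Exy; move: He; rewrite !mem_cat => /or3P[HeA|HeM|HeB].
  - have [a' [_ [/c_ends/andP[ca' _] Ha' _]]] := mem_trail_edge HA HeA.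
    by move: (allP Ha _ Ha') => /=; rewrite ca'.
  - have [_ [b' [_ _ Hb']]] := mem_trail_edge HM HeM.
    have ymvs : y \in mvs by rewrite /y; case: (mvs) Hb' => //= m ms _; apply: mem_last.
    move: Hu; rewrite -cat_cons cat_uniq => /and3P[_ /hasPn/(_ y)].
    by rewrite mem_cat ymvs -Exy mem_last => /(_ isT).
  - have [_ [b' [/c_ends/andP[_ cb'] _ Hb']]] := mem_trail_edge HB HeB.
    by move: (allP Hb _ Hb') => /=; rewrite cb'.
exists x, y, A, B, avs, bvs; split.
- by rewrite cx cy Hxy.
- rewrite /st_path_with HA eqxx andbT.
  by move: Hu; rewrite -cat_cons cat_uniq => /andP[].
- rewrite /st_path_with HB /= Hyb -Ht catA !last_cat eqxx andbT.
  by move: Hu'; rewrite cat_uniq => /and3P[].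
- apply: subseq_uniq Hu.
  exact: (cat_subseq (subseq_refl (s :: avs)) (suffix_subseq mvs bvs)).
- by rewrite all_cat Ha Hb.
Qed.

Lemma st_path_detour (c : pred V) s t x y A B Q avs bvs W :
  st_path_with s x A avs -> st_path_with y t B bvs -> uniq (s :: avs ++ bvs) ->
  all (predC c) (belast s avs ++ bvs) -> st_path_with x y Q W -> all c W ->
  st_path_with s t (A ++ Q ++ B) (avs ++ W ++ bvs).
Proof.
move=> HA HB Hu Hnc HQ Hc.
have Eavs : s :: avs = rcons (belast s avs) x.
  by case/and3P: HA => _ _ /eqP <-; rewrite lastI.
have HxQ : uniq (x :: W) by case/and3P: HQ.
move: (Hu); rewrite -cat_cons Eavs cat_rcons.
rewrite (perm_uniq (permEl (perm_catCA _ [:: x] _))) /= => /andP[Hx Hb].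
have Hfull : uniq (s :: avs ++ W ++ bvs).
  rewrite -cat_cons Eavs cat_rcons (perm_uniq (permEl (perm_catCA _ (x :: W) _))).
  rewrite cat_uniq HxQ Hb.
  rewrite andbT; apply/hasPn => z Hz; rewrite inE negb_or.
  apply/andP; split; first by apply: contraNneq Hx => <-.
  by apply/negP => /(allP Hc); apply/negP: (allP Hnc _ Hz).
apply: st_path_with_cat HA _ (Hfull); apply: st_path_with_cat HQ HB _.
by move: Hfull; rewrite -cat_cons Eavs cat_rcons cat_uniq => /and3P[].
Qed.

End Trails.

Theorem mainTheorem10 (V E : finType) (ends : E -> V * V) (s t : V) (T : {set E}) :
  reduced ends s t -> tracking ends s t T ->
  forall C : seq E, is_cycle ends C -> exists2 e, e \in C & e \in T.
Proof.
move=> [_ edge_on_path] Htrack C [u [vs /and4P[C_gt0 HC Huvs HuC]]].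
have [/hasP[e eC eT]|noT] := boolP (has (mem T) C); first by exists e.
exfalso; set ws := rcons vs u in HC.
have ws_uniq : uniq ws by rewrite rcons_uniq.
have [e0 e0C] : exists e0, e0 \in C.
  by case: (C) C_gt0 => // e0 C' _; exists e0; rewrite inE eqxx.
have [P [[ps HP] e0P]] := edge_on_path e0.
have [a [b [Hab Ha Hb]]] := mem_trail_edge HC e0C.
rewrite belast_rcons -mem_rcons in Ha.
have [x [y [A [B [avs [bvs [/and3P[xC yC xy] HA HB Hu Hnc]]]]]]] :=
  st_path_entry_exit (c := [in ws]) HP e0P Hab Ha Hb.
have [D1 [D2 [W1 [W2 [HD HD1 HD2 HW]]]]] :=
  closed_trail_arcs HC (last_rcons u vs u) ws_uniq xC yC xy.
have detour Q W : st_path_with ends x y Q W -> {subset W <= W1 ++ W2} ->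
    st_path ends s t (A ++ Q ++ B).
  move=> HQ HW'; exists (avs ++ W ++ bvs).
  by apply: st_path_detour HA HB Hu Hnc HQ _; apply/allP => z /HW'/HW.
have [noT1 noT2] : ~~ has (mem T) D1 /\ ~~ has (mem T) D2.
  by apply/norP; rewrite -has_cat (perm_has _ HD).
apply: (Htrack _ _ (detour _ _ HD1 _) (detour _ _ HD2 _)).
- by move=> z Hz; rewrite mem_cat Hz.
- by move=> z Hz; rewrite mem_cat Hz orbT.
- move=> E12; have HD12 : perm_eq D1 D2.
    by rewrite -(perm_cat2l A) -(perm_cat2r B) -!catA E12.
  have [d dD1] : exists d, d \in D1.
    by case: (D1) (st_path_with_size_gt0 HD1 xy) => // d D1' _; exists d; rewrite inE eqxx.
  move: (HuC); rewrite -(perm_uniq HD) cat_uniq => /and3P[_ /hasPn/(_ d) + _].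
  by rewrite -(perm_mem HD12) dD1 => /(_ isT).
- move: noT1 noT2; rewrite !has_filter !negbK => /eqP noT1 /eqP noT2.
  by rewrite !filter_cat noT1 noT2.
Qed.
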